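(* Let $G$ be a locally Hausdorff, locally compact groupoid such that $G^{(0)}$ is paracompact. Then $G$ has a fundamental system of diagonally compact neighborhoods of $G^{(0)}$: for every neighborhood $V$ of $G^{(0)}$ in $G$ there is a diagonally compact neighborhood $U$ of $G^{(0)}$ with $U\subset V$.
   Context: A locally Hausdorff, locally compact groupoid: groupoid operations continuous, $G^{(0)}$ Hausdorff, each point has a compact Hausdorff neighborhood, range map open. ''Compact'' means the finite-subcover property (not necessarily Hausdorff). A subset $U\subset G$ is diagonally compact if $UW=\{\alpha\beta:\alpha\in U,\beta\in W, s(\alpha)=r(\beta)\}$ and $WU$ are compact whenever $W\subset G$ is compact. *)

From Stdlib Require Import List.
Set Implicit Arguments.

Record Topology (X : Type) := {
  is_open : (X -> Prop) -> Prop;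
  open_full : is_open (fun _ => True);
  open_inter : forall U V : X -> Prop,
      is_open U -> is_open V -> is_open (fun x => U x /\ V x);
  open_union : forall (I : Type) (F : I -> X -> Prop),
      (forall i, is_open (F i)) -> is_open (fun x => exists i, F i x)
}.

Section Topo.
Variables (X : Type) (T : Topology X).

Definition rel_open (A W : X -> Prop) : Prop :=
  exists O, is_open T O /\ forall x, A x -> (W x <-> O x).

(** Compact = finite-subcover property (no Hausdorff assumption). *)
Definition compact (K : X -> Prop) : Prop :=
  forall (I : Type) (U : I -> X -> Prop),
    (forall i, is_open T (U i)) ->
    (forall x, K x -> exists i, U i x) ->
    exists l : list I, forall x, K x -> exists i, In i l /\ U i x.

Definition hausdorff_on (A : X -> Prop) : Prop :=
  forall x y, A x -> A y -> x <> y ->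
    exists O1 O2, is_open T O1 /\ is_open T O2 /\ O1 x /\ O2 y /\
      (forall z, A z -> O1 z -> O2 z -> False).

Definition nbhd_of_set (A N : X -> Prop) : Prop :=
  exists O, is_open T O /\ (forall x, A x -> O x) /\ (forall x, O x -> N x).

Definition nbhd_of_point (x : X) (N : X -> Prop) : Prop :=
  exists O, is_open T O /\ O x /\ (forall y, O y -> N y).

Definition paracompact_on (A : X -> Prop) : Prop :=
  forall (I : Type) (U : I -> X -> Prop),
    (forall i, rel_open A (U i)) ->
    (forall x, A x -> exists i, U i x) ->
    exists (J : Type) (V : J -> X -> Prop),
      (forall j, rel_open A (V j)) /\
      (forall x, A x -> exists j, V j x) /\
      (forall j, exists i, forall x, A x -> V j x -> U i x) /\
      (forall x, A x -> exists W, rel_open A W /\ W x /\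
         exists l : list J, forall j,
           (exists y, A y /\ W y /\ V j y) -> In j l).
End Topo.

Definition prod_open (X Y : Type) (TX : Topology X) (TY : Topology Y)
  (W : X * Y -> Prop) : Prop :=
  forall p, W p -> exists U V, is_open TX U /\ is_open TY V /\
    U (fst p) /\ V (snd p) /\ (forall x y, U x -> V y -> W (x, y)).

(** * Groupoids (the unit space is a subset of the arrow set) *)
Record Groupoid (G : Type) := {
  rng : G -> G;
  src : G -> G;
  mul : G -> G -> G;   (* meaningful only on composable pairs: src x = rng y *)
  inv : G -> G;
  rng_rng : forall x, rng (rng x) = rng x;
  src_rng : forall x, src (rng x) = rng x;
  rng_src : forall x, rng (src x) = src x;
  src_src : forall x, src (src x) = src x;
  rng_mul : forall x y, src x = rng y -> rng (mul x y) = rng x;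
  src_mul : forall x y, src x = rng y -> src (mul x y) = src y;
  mul_assoc : forall x y z, src x = rng y -> src y = rng z ->
      mul (mul x y) z = mul x (mul y z);
  mul_rng_l : forall x, mul (rng x) x = x;
  mul_src_r : forall x, mul x (src x) = x;
  rng_inv : forall x, rng (inv x) = src x;
  src_inv : forall x, src (inv x) = rng x;
  mul_inv_r : forall x, mul x (inv x) = rng x;
  mul_inv_l : forall x, mul (inv x) x = src x
}.

Section GroupoidDefs.
Variables (G : Type) (T : Topology G) (gr : Groupoid G).

Definition units (x : G) : Prop := rng gr x = x.

Definition set_prod (U W : G -> Prop) : G -> Prop :=
  fun g => exists a b, U a /\ W b /\ src gr a = rng gr b /\ g = mul gr a b.

Definition lhlc_groupoid : Prop :=
  (* multiplication continuous on G^(2) (subspace of G × G) *)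
  (forall O, is_open T O -> exists W, prod_open T T W /\
     forall x y, src gr x = rng gr y -> (O (mul gr x y) <-> W (x, y))) /\
  (forall O, is_open T O -> is_open T (fun x => O (inv gr x))) /\
  hausdorff_on T units /\
  (forall x, exists K, nbhd_of_point T x K /\ compact T K /\ hausdorff_on T K) /\
  (forall O, is_open T O -> rel_open T units (fun u => exists g, O g /\ u = rng gr g)).

Definition diagonally_compact (U : G -> Prop) : Prop :=
  forall W, compact T W -> compact T (set_prod U W) /\ compact T (set_prod W U).
End GroupoidDefs.

(** Every unit [u]
    has a compact [K ⊆ OV] containing an open [P ∋ u]; by paracompactness the
    cover of [G⁽⁰⁾] by these [P] has a locally finite, relatively open
    refinement [(V j)], with [V j ⊆ P (idx j) ⊆ K (idx j)].  With [cl(V j)] the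
    closure of [V j] in [G⁽⁰⁾], the set
        [U = ⋃_j (K (idx j) ∩ r⁻¹(cl V j) ∩ s⁻¹(cl V j))]
    is the required neighbourhood: each piece is compact (closed in a compact
    set), [U] contains an open set around [G⁽⁰⁾], and for compact [W] only
    finitely many pieces compose with [W] (the family [cl(V j)] is locally
    finite and [r(W)], [s(W)] are compact), while the product of two compact
    sets is compact because [G⁽⁰⁾] is Hausdorff. *)
From Stdlib Require Import List Classical FunctionalExtensionality
  PropExtensionality IndefiniteDescription.
(** Options that are [Some]: used to discard the auxiliary member of an
    enlarged cover once a finite subcover has been extracted. *)
Fixpoint some_values {I : Type} (l : list (option I)) : list I :=
  match l with
  | nil => nil
  | Some i :: t => i :: some_values t
  | None :: t => some_values t
  end.

Lemma in_some_values {I : Type} (l : list (option I)) (i : I) :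
  In (Some i) l -> In i (some_values l).
Proof.
  induction l as [|[j|] t IH]; simpl; intros H.
  - contradiction.
  - destruct H as [H|H]; [injection H as ->; left; reflexivity | right; auto].
  - destruct H as [H|H]; [discriminate | auto].
Qed.

Section GeneralTopology.
Context {X : Type} (T : Topology X).

Lemma open_ext (A B : X -> Prop) :
  is_open T A -> (forall x, A x <-> B x) -> is_open T B.
Proof.
  intros HA H.
  replace B with A; [exact HA|].
  apply functional_extensionality; intro x; apply propositional_extensionality; auto.
Qed.

Lemma compact_ext (A B : X -> Prop) :
  compact T A -> (forall x, A x <-> B x) -> compact T B.
Proof.
  intros HA H.
  replace B with A; [exact HA|].
  apply functional_extensionality; intro x; apply propositional_extensionality; auto.
Qed.

Lemma open_local (S : X -> Prop) :
  (forall x, S x -> exists O, is_open T O /\ O x /\ forall y, O y -> S y) ->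
  is_open T S.
Proof.
  intros H.
  pose (I := {O : X -> Prop | is_open T O /\ forall y, O y -> S y}).
  apply open_ext with (A := fun x => exists i : I, proj1_sig i x).
  - apply (open_union T (fun i : I => proj1_sig i)).
    intros i; exact (proj1 (proj2_sig i)).
  - intro x; split.
    + intros [[O [HO HS]] Ox]; exact (HS x Ox).
    + intros Sx; destruct (H x Sx) as [O [HO [Ox HS]]].
      exists (exist _ O (conj HO HS)); exact Ox.
Qed.

Lemma open_or (A B : X -> Prop) :
  is_open T A -> is_open T B -> is_open T (fun x => A x \/ B x).
Proof.
  intros HA HB.
  apply open_ext with (A := fun x => exists b : bool, (if b then A else B) x).
  - apply (open_union T (fun b : bool => if b then A else B)); intros [|]; auto.
  - intro x; split.
    + intros [[|] H]; auto.
    + intros [H|H]; [exists true | exists false]; auto.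
Qed.

Lemma open_finite_inter {J : Type} (F : J -> X -> Prop) (L : list J) :
  (forall j, In j L -> is_open T (F j)) ->
  is_open T (fun x => forall j, In j L -> F j x).
Proof.
  induction L as [|a L IH]; intros H.
  - apply open_ext with (A := fun _ => True); [apply open_full|].
    intro x; simpl; split; tauto.
  - apply open_ext with (A := fun x => F a x /\ (forall j, In j L -> F j x)).
    + apply open_inter; [apply H; left; reflexivity|].
      apply IH; intros j Hj; apply H; right; exact Hj.
    + intro x; simpl; split.
      * intros [Ha HL] j [<-|Hj]; auto.
      * intros HL; split; auto.
Qed.

Lemma open_finite_union {J : Type} (F : J -> X -> Prop) (L : list J) :
  (forall j, In j L -> is_open T (F j)) ->
  is_open T (fun x => exists j, In j L /\ F j x).
Proof.
  intros H.
  apply open_ext with (A := fun x => exists i : {j : J | In j L}, F (proj1_sig i) x).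
  - apply (open_union T (fun i : {j : J | In j L} => F (proj1_sig i))).
    intros [j Hj]; exact (H j Hj).
  - intro x; split.
    + intros [[j Hj] Hx]; exists j; auto.
    + intros [j [Hj Hx]]; exists (exist _ j Hj); exact Hx.
Qed.

Lemma compact_diff (K O : X -> Prop) :
  compact T K -> is_open T O -> compact T (fun x => K x /\ ~ O x).
Proof.
  intros HK HO I U HU Hcov.
  destruct (HK (option I) (fun o => match o with Some i => U i | None => O end))
    as [l Hl].
  - intros [i|]; auto.
  - intros x Kx; destruct (classic (O x)) as [Ox|nOx].
    + exists None; exact Ox.
    + destruct (Hcov x (conj Kx nOx)) as [i Ui]; exists (Some i); exact Ui.
  - exists (some_values l); intros x [Kx nOx].
    destruct (Hl x Kx) as [[i|] [Hin Hx]].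
    + exists i; split; [apply in_some_values|]; assumption.
    + contradiction.
Qed.

Lemma compact_finite_union {J : Type} (S : X -> Prop) (F : J -> X -> Prop)
    (L : list J) :
  (forall j, In j L -> compact T (F j)) ->
  (forall x, S x <-> exists j, In j L /\ F j x) -> compact T S.
Proof.
  intros HF HS; apply compact_ext with (A := fun x => exists j, In j L /\ F j x);
    [|intro x; symmetry; apply HS].
  clear S HS; induction L as [|a L IH]; intros I U HU Hcov.
  - exists nil; intros x [j [[] _]].
  - destruct (HF a (or_introl eq_refl) I U HU) as [l1 H1].
    { intros x Hx; apply Hcov; exists a; split; [left|]; auto. }
    destruct (IH (fun j Hj => HF j (or_intror Hj)) I U HU) as [l2 H2].
    { intros x [j [Hj Hx]]; apply Hcov; exists j; split; [right|]; auto. }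
    exists (l1 ++ l2); intros x [j [[<-|Hj] Hx]].
    + destruct (H1 x Hx) as [i [Hi Ui]].
      exists i; split; [apply in_or_app; left|]; auto.
    + destruct (H2 x (ex_intro _ j (conj Hj Hx))) as [i [Hi Ui]].
      exists i; split; [apply in_or_app; right|]; auto.
Qed.

Lemma tube_slice {I : Type} (B : X -> Prop) (Q : I -> X -> X -> Prop) (a : X) :
  compact T B ->
  (forall b, B b -> exists i U V, is_open T U /\ is_open T V /\ U a /\ V b /\
       forall x y, U x -> V y -> Q i x y) ->
  exists (Ua : X -> Prop) (li : list I), is_open T Ua /\ Ua a /\
    forall x b, Ua x -> B b -> exists i, In i li /\ Q i x b.
Proof.
  intros HB H.
  pose (R := {p : I * (X -> Prop) * (X -> Prop) |
          is_open T (snd (fst p)) /\ is_open T (snd p) /\ snd (fst p) a /\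
          forall x y, snd (fst p) x -> snd p y -> Q (fst (fst p)) x y}).
  destruct (HB R (fun p => snd (proj1_sig p))) as [L HL].
  - intros p; exact (proj1 (proj2 (proj2_sig p))).
  - intros b Bb; destruct (H b Bb) as [i [U [V [HU [HV [Ua [Vb HQ]]]]]]].
    exists (exist _ (i, U, V) (conj HU (conj HV (conj Ua HQ)))); exact Vb.
  - exists (fun x => forall p, In p L -> snd (fst (proj1_sig p)) x),
      (map (fun p => fst (fst (proj1_sig p))) L).
    split; [|split].
    + apply open_finite_inter; intros p _; exact (proj1 (proj2_sig p)).
    + intros p _; exact (proj1 (proj2 (proj2 (proj2_sig p)))).
    + intros x b Hx Bb; destruct (HL b Bb) as [p [Hp Vb]].
      exists (fst (fst (proj1_sig p))); split;
        [exact (in_map (fun p : R => fst (fst (proj1_sig p))) L p Hp)|].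
      exact (proj2 (proj2 (proj2 (proj2_sig p))) x b (Hx p Hp) Vb).
Qed.

Lemma tube {I : Type} (A B : X -> Prop) (Q : I -> X -> X -> Prop) :
  compact T A -> compact T B ->
  (forall a b, A a -> B b -> exists i U V, is_open T U /\ is_open T V /\
       U a /\ V b /\ forall x y, U x -> V y -> Q i x y) ->
  exists l : list I, forall a b, A a -> B b -> exists i, In i l /\ Q i a b.
Proof.
  intros HA HB H.
  pose (R := {t : (X -> Prop) * list I | is_open T (fst t) /\
               forall x b, fst t x -> B b -> exists i, In i (snd t) /\ Q i x b}).
  destruct (HA R (fun t => fst (proj1_sig t))) as [L HL].
  - intros t; exact (proj1 (proj2_sig t)).
  - intros a Aa.
    destruct (tube_slice B Q a HB (fun b Bb => H a b Aa Bb)) as [Ua [li [HU [Uaa HQ]]]].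
    exists (exist _ (Ua, li) (conj HU HQ)); exact Uaa.
  - exists (flat_map (fun t => snd (proj1_sig t)) L).
    intros a b Aa Bb; destruct (HL a Aa) as [t [Ht Hta]].
    destruct (proj2 (proj2_sig t) a b Hta Bb) as [i [Hi Qi]].
    exists i; split; [apply in_flat_map; exists t|]; auto.
Qed.

Lemma separate_point_compact (K C : X -> Prop) (u : X) :
  hausdorff_on T K -> compact T C -> (forall x, C x -> K x) -> K u -> ~ C u ->
  exists O1 O2, is_open T O1 /\ is_open T O2 /\ O1 u /\ (forall x, C x -> O2 x) /\
    (forall z, K z -> O1 z -> O2 z -> False).
Proof.
  intros HH HC CK Ku nCu.
  pose (R := {p : (X -> Prop) * (X -> Prop) | is_open T (fst p) /\ is_open T (snd p) /\
            fst p u /\ forall z, K z -> fst p z -> snd p z -> False}).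
  destruct (HC R (fun p => snd (proj1_sig p))) as [L HL].
  - intros p; exact (proj1 (proj2 (proj2_sig p))).
  - intros x Cx.
    assert (Hne : u <> x) by (intros <-; contradiction).
    destruct (HH u x Ku (CK x Cx) Hne) as [O1 [O2 [H1 [H2 [O1u [O2x Hd]]]]]].
    exists (exist _ (O1, O2) (conj H1 (conj H2 (conj O1u Hd)))); exact O2x.
  - exists (fun x => forall p, In p L -> fst (proj1_sig p) x),
      (fun x => exists p, In p L /\ snd (proj1_sig p) x).
    split; [apply open_finite_inter; intros p _; exact (proj1 (proj2_sig p))|].
    split; [apply open_finite_union; intros p _; exact (proj1 (proj2 (proj2_sig p)))|].
    split; [intros p _; exact (proj1 (proj2 (proj2 (proj2_sig p))))|].
    split; [exact HL|].
    intros z Kz H1 [p [Hp H2]].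
    exact (proj2 (proj2 (proj2 (proj2_sig p))) z Kz (H1 p Hp) H2).
Qed.

Lemma compact_nbhd_basis (u : X) (K O : X -> Prop) :
  nbhd_of_point T u K -> compact T K -> hausdorff_on T K ->
  is_open T O -> O u ->
  exists K' P, compact T K' /\ (forall x, K' x -> O x) /\ is_open T P /\ P u /\
    (forall x, P x -> K' x).
Proof.
  intros [P0 [HP0 [P0u P0K]]] HK HH HO Ou.
  pose (N := fun x => P0 x /\ O x).
  assert (HN : is_open T N) by (apply open_inter; assumption).
  destruct (separate_point_compact K (fun x => K x /\ ~ N x) u HH
              (compact_diff K N HK HN) (fun x Hx => proj1 Hx) (P0K u P0u)
              (fun H => proj2 H (conj P0u Ou)))
    as [O1 [O2 [HO1 [HO2 [O1u [O2C Hd]]]]]].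
  exists (fun x => K x /\ ~ O2 x), (fun x => N x /\ O1 x).
  split; [apply compact_diff; assumption|].
  split; [|split; [apply open_inter; assumption|split; [split; [split|]; assumption|]]].
  - intros x [Kx nO2x]; apply NNPP; intros nOx.
    apply nO2x, O2C; split; [exact Kx|]; intros [_ Ox]; contradiction.
  - intros x [[P0x _] O1x]; split; [exact (P0K x P0x)|].
    exact (Hd x (P0K x P0x) O1x).
Qed.

Definition rel_closure (A S : X -> Prop) (y : X) : Prop :=
  A y /\ forall O, is_open T O -> O y -> exists z, A z /\ S z /\ O z.

Lemma rel_closure_closed (A S : X -> Prop) :
  exists E, is_open T E /\ forall y, A y -> (rel_closure A S y <-> ~ E y).
Proof.
  exists (fun y => exists O, is_open T O /\ O y /\ ~ exists z, A z /\ S z /\ O z).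
  split.
  - apply open_local; intros y [O [HO [Oy Hn]]].
    exists O; split; [|split]; [assumption..|]; intros y' Oy'; exists O; auto.
  - intros y Ay; split.
    + intros [_ Hcl] [O [HO [Oy Hn]]]; exact (Hn (Hcl O HO Oy)).
    + intros Hn; split; [exact Ay|]; intros O HO Oy.
      apply NNPP; intros Hc; apply Hn; exists O; auto.
Qed.

Lemma rel_closure_incl (A S : X -> Prop) (y : X) :
  A y -> S y -> rel_closure A S y.
Proof. intros Ay Sy; split; [exact Ay|]; intros O _ Oy; exists y; auto. Qed.

Definition locally_finite {J : Type} (A : X -> Prop) (F : J -> X -> Prop) : Prop :=
  forall x, A x -> exists O, is_open T O /\ O x /\
    exists l : list J, forall j y, A y -> O y -> F j y -> In j l.

Lemma locally_finite_closure {J : Type} (A : X -> Prop) (S : J -> X -> Prop) :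
  locally_finite A S -> locally_finite A (fun j => rel_closure A (S j)).
Proof.
  intros HS x Ax; destruct (HS x Ax) as [O [HO [Ox [l Hl]]]].
  exists O; split; [|split]; [assumption..|]; exists l.
  intros j y _ Oy [_ Hcl]; destruct (Hcl O HO Oy) as [z [Az [Sz Oz]]].
  exact (Hl j z Az Oz Sz).
Qed.

Lemma locally_finite_compact {J : Type} (A : X -> Prop) (F : J -> X -> Prop)
    (f : X -> X) (W : X -> Prop) :
  locally_finite A F ->
  (forall O, is_open T O -> is_open T (fun x => O (f x))) ->
  (forall a, A (f a)) -> compact T W ->
  exists L, forall j a, W a -> F j (f a) -> In j L.
Proof.
  intros HF Hf HA HW.
  pose (R := {p : (X -> Prop) * list J | is_open T (fst p) /\
             forall j y, A y -> fst p y -> F j y -> In j (snd p)}).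
  destruct (HW R (fun p a => fst (proj1_sig p) (f a))) as [l Hl].
  - intros p; apply Hf; exact (proj1 (proj2_sig p)).
  - intros a _; destruct (HF (f a) (HA a)) as [O [HO [Ofa [lO HlO]]]].
    exists (exist _ (O, lO) (conj HO HlO)); exact Ofa.
  - exists (flat_map (fun p => snd (proj1_sig p)) l); intros j a Wa Fa.
    destruct (Hl a Wa) as [p [Hp Op]].
    apply in_flat_map; exists p; split; [exact Hp|].
    exact (proj2 (proj2_sig p) j (f a) (HA a) Op Fa).
Qed.

Lemma paracompact_refinement {I : Type} (A : X -> Prop) (P : I -> X -> Prop) :
  paracompact_on T A ->
  (forall i, is_open T (P i)) -> (forall x, A x -> exists i, P i x) ->
  exists (J : Type) (V : J -> X -> Prop) (idx : J -> I),
    (forall j, rel_open T A (V j)) /\ (forall x, A x -> exists j, V j x) /\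
    (forall j x, A x -> V j x -> P (idx j) x) /\ locally_finite A V.
Proof.
  intros Hpara HP Hcov.
  destruct (Hpara I P) as [J [V [HVrel [HVcov [HVref HVlf]]]]];
    [intros i; exists (P i); split; [apply HP | tauto] | exact Hcov |].
  destruct (functional_choice _ HVref) as [idx Hidx].
  exists J, V, idx; split; [|split; [|split]]; try assumption.
  intros x Ax; destruct (HVlf x Ax) as [W [[O [HO HWO]] [Wx [l Hl]]]].
  exists O; split; [|split]; [assumption | apply HWO; assumption|].
  exists l; intros j y Ay Oy Vy; apply Hl; exists y; split; [|split]; try assumption.
  apply HWO; assumption.
Qed.

End GeneralTopology.

Section TopologicalGroupoid.
Context {G : Type} (T : Topology G) (gr : Groupoid G).

Hypothesis mul_continuous : forall O, is_open T O -> exists W, prod_open T T W /\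
  forall x y, src gr x = rng gr y -> (O (mul gr x y) <-> W (x, y)).
Hypothesis inv_continuous :
  forall O, is_open T O -> is_open T (fun x => O (inv gr x)).

(** The range map is continuous, since [r(x) = x x⁻¹]. *)
Lemma rng_continuous (O : G -> Prop) :
  is_open T O -> is_open T (fun x => O (rng gr x)).
Proof.
  intros HO; destruct (mul_continuous O HO) as [W [HW HOW]].
  assert (Hcomp : forall y, src gr y = rng gr (inv gr y))
    by (intro y; rewrite rng_inv; reflexivity).
  apply open_local; intros x Ox.
  assert (Wx : W (x, inv gr x))
    by (apply (HOW x (inv gr x) (Hcomp x)); rewrite mul_inv_r; exact Ox).
  destruct (HW _ Wx) as [U [V [HU [HV [Ux [Vx HUV]]]]]].
  exists (fun y => U y /\ V (inv gr y)); split; [apply open_inter; auto|].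
  split; [split; assumption|]; intros y [Uy Vy].
  rewrite <- (mul_inv_r gr y); apply (HOW y (inv gr y) (Hcomp y)), HUV; assumption.
Qed.

(** The source map is continuous, since [s(x) = r(x⁻¹)]. *)
Lemma src_continuous (O : G -> Prop) :
  is_open T O -> is_open T (fun x => O (src gr x)).
Proof.
  intros HO; apply open_ext with (A := fun x => O (rng gr (inv gr x))).
  - apply (inv_continuous (fun x => O (rng gr x))), rng_continuous, HO.
  - intro x; rewrite rng_inv; reflexivity.
Qed.

Lemma units_src (x : G) : units gr x -> src gr x = x.
Proof. unfold units; intros Hx; rewrite <- Hx at 1; rewrite src_rng; exact Hx. Qed.

Hypothesis units_hausdorff : hausdorff_on T (units gr).

(** Cover [A × B] by
    open rectangles: around a composable pair, one mapped into a member of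
    the cover by continuity of multiplication; around a non-composable pair
    [(a, b)], the preimages under [s] and [r] of disjoint neighbourhoods of
    [s(a) ≠ r(b)] in the Hausdorff unit space.  Then apply the tube lemma. *)
Lemma set_prod_compact (A B : G -> Prop) :
  compact T A -> compact T B -> compact T (set_prod gr A B).
Proof.
  intros HA HB I U HU Hcov.
  destruct (tube T A B (fun (o : option I) x y => match o with
      | None => src gr x <> rng gr y
      | Some i => src gr x = rng gr y -> U i (mul gr x y) end) HA HB) as [l Hl].
  - intros a b Aa Bb; destruct (classic (src gr a = rng gr b)) as [E|NE].
    + destruct (Hcov (mul gr a b)) as [i Ui]; [exists a, b; auto|].
      destruct (mul_continuous _ (HU i)) as [W [HW HOW]].
      destruct (HW (a, b)) as [U1 [V1 [HU1 [HV1 [Ua [Vb HUV]]]]]];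
        [apply (HOW a b E); exact Ui|].
      exists (Some i), U1, V1; do 4 (split; [assumption|]).
      intros x y Ux Vy Exy; apply (HOW x y Exy), HUV; assumption.
    + destruct (units_hausdorff (src gr a) (rng gr b) (rng_src gr a) (rng_rng gr b) NE)
        as [O1 [O2 [HO1 [HO2 [O1a [O2b Hdis]]]]]].
      exists None, (fun x => O1 (src gr x)), (fun y => O2 (rng gr y)).
      split; [apply src_continuous; exact HO1|].
      split; [apply rng_continuous; exact HO2|].
      do 2 (split; [assumption|]).
      intros x y Ox Oy Exy; apply (Hdis (src gr x) (rng_src gr x) Ox).
      rewrite Exy; exact Oy.
  - exists (some_values l); intros g [a [b [Aa [Bb [E ->]]]]].
    destruct (Hl a b Aa Bb) as [[i|] [Hin Q]].
    + exists i; split; [apply in_some_values; exact Hin | exact (Q E)].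
    + contradiction.
Qed.

(** [reduction K F] is [K ∩ G|F]: the arrows of [K] whose range and source
    lie in [F ⊆ G⁽⁰⁾]. *)
Definition reduction (K F : G -> Prop) (g : G) : Prop :=
  K g /\ F (rng gr g) /\ F (src gr g).

(** If [F] is closed in [G⁽⁰⁾], [G|F] is closed, so [K ∩ G|F] is compact. *)
Lemma reduction_compact (K F : G -> Prop) :
  compact T K -> (exists E, is_open T E /\ forall y, units gr y -> (F y <-> ~ E y)) ->
  compact T (reduction K F).
Proof.
  intros HK [E [HE HFE]].
  apply compact_ext with
      (A := fun g => K g /\ ~ (E (rng gr g) \/ E (src gr g))).
  - apply compact_diff; [exact HK|].
    apply open_or; [apply rng_continuous | apply src_continuous]; exact HE.
  - intro g; unfold reduction.
    rewrite (HFE _ (rng_rng gr g)), (HFE _ (rng_src gr g)); tauto.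
Qed.

(** A union of compact sets [C j] is diagonally compact when the ranges and
    sources of [C j] lie in [F j] for a family [F] locally finite on [G⁽⁰⁾]:
    the image [r(W)] (resp. [s(W)]) of a compact [W] meets only finitely
    many [F j], so [(⋃ C j) W] is a finite union of compact sets [C j W]. *)
Lemma union_diagonally_compact {J : Type} (C F : J -> G -> Prop) :
  (forall j, compact T (C j)) ->
  (forall j a, C j a -> F j (rng gr a) /\ F j (src gr a)) ->
  locally_finite T (units gr) F ->
  diagonally_compact T gr (fun g => exists j, C j g).
Proof.
  intros HC HCF HF W HW; split.
  - destruct (locally_finite_compact T (units gr) F (rng gr) W HF
                rng_continuous (rng_rng gr) HW) as [L HL].
    apply (compact_finite_union T _ (fun j => set_prod gr (C j) W) L).
    + intros j _; apply set_prod_compact; [apply HC | exact HW].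
    + intro g; split.
      * intros [a [b [[j Ca] [Wb [E ->]]]]]; exists j; split.
        -- apply (HL j b Wb); rewrite <- E; exact (proj2 (HCF j a Ca)).
        -- exists a, b; auto.
      * intros [j [_ [a [b [Ca [Wb [E ->]]]]]]]; exists a, b.
        split; [exists j|]; auto.
  - destruct (locally_finite_compact T (units gr) F (src gr) W HF
                src_continuous (rng_src gr) HW) as [L HL].
    apply (compact_finite_union T _ (fun j => set_prod gr W (C j)) L).
    + intros j _; apply set_prod_compact; [exact HW | apply HC].
    + intro g; split.
      * intros [a [b [Wa [[j Cb] [E ->]]]]]; exists j; split.
        -- apply (HL j a Wa); rewrite E; exact (proj1 (HCF j b Cb)).
        -- exists a, b; auto.
      * intros [j [_ [a [b [Wa [Cb [E ->]]]]]]]; exists a, b.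
        split; [|split; [exists j|]]; auto.
Qed.

(** If the relatively open sets [V j] cover [G⁽⁰⁾] and [V j ⊆ P j ⊆ K j] with
    [P j] open, then [⋃ K j ∩ G|cl(V j)] is a neighbourhood of [G⁽⁰⁾]: it
    contains the open set [⋃ P j ∩ r⁻¹(O j) ∩ s⁻¹(O j)], where [O j] is an
    open set whose trace on [G⁽⁰⁾] is [V j]. *)
Lemma reduction_union_nbhd {J : Type} (K P V : J -> G -> Prop) :
  (forall j, is_open T (P j)) -> (forall j x, P j x -> K j x) ->
  (forall j, rel_open T (units gr) (V j)) ->
  (forall x, units gr x -> exists j, V j x) ->
  (forall j x, units gr x -> V j x -> P j x) ->
  nbhd_of_set T (units gr)
    (fun g => exists j, reduction (K j) (rel_closure T (units gr) (V j)) g).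
Proof.
  intros HP HPK HV Hcov HVP.
  exists (fun g => exists j O, is_open T O /\
            (forall x, units gr x -> (V j x <-> O x)) /\
            P j g /\ O (rng gr g) /\ O (src gr g)).
  split; [|split].
  - apply open_local; intros g [j [O [HO [HVO Hg]]]].
    exists (fun g' => P j g' /\ O (rng gr g') /\ O (src gr g')).
    split; [apply open_inter; [|apply open_inter]|split; [exact Hg|]].
    + apply HP.
    + apply rng_continuous; exact HO.
    + apply src_continuous; exact HO.
    + intros g' Hg'; exists j, O; auto.
  - intros x Hx; destruct (Hcov x Hx) as [j Vj]; destruct (HV j) as [O [HO HVO]].
    exists j, O; split; [exact HO|]; split; [exact HVO|].
    split; [exact (HVP j x Hx Vj)|].
    unfold units in Hx; rewrite Hx, (units_src x Hx); split; apply HVO; assumption.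
  - intros g [j [O [_ [HVO [Pg [Or Os]]]]]]; exists j.
    split; [exact (HPK j g Pg)|].
    split; apply rel_closure_incl; try apply HVO;
      first [apply rng_rng | apply rng_src | assumption].
Qed.

End TopologicalGroupoid.

Theorem mainTheorem4 (G : Type) (T : Topology G) (gr : Groupoid G) :
  lhlc_groupoid T gr ->
  paracompact_on T (units gr) ->
  forall V : G -> Prop, nbhd_of_set T (units gr) V ->
  exists U : G -> Prop,
    nbhd_of_set T (units gr) U /\ diagonally_compact T gr U /\
    (forall g, U g -> V g).
Proof.
  intros [Hmul [Hinv [Hhaus [Hloc _]]]] Hpara V [OV [HOV [OVu OVV]]].
  (* compact sets inside [OV] together with an open set they contain *)
  pose (I := {p : (G -> Prop) * (G -> Prop) | compact T (fst p) /\
          (forall x, fst p x -> OV x) /\ is_open T (snd p) /\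
          (forall x, snd p x -> fst p x)}).
  pose (K := fun i : I => fst (proj1_sig i)).
  pose (P := fun i : I => snd (proj1_sig i)).
  destruct (paracompact_refinement T (units gr) P Hpara) as
      [J [W [idx [HWrel [HWcov [HWP HWlf]]]]]].
  - intros i; exact (proj1 (proj2 (proj2 (proj2_sig i)))).
  - intros u Hu; destruct (Hloc u) as [Ku [HKu [Kuc Kuh]]].
    destruct (compact_nbhd_basis T u Ku OV HKu Kuc Kuh HOV (OVu u Hu))
      as [K' [P' [HK' [HK'V [HP' [P'u HP'K']]]]]].
    exists (exist _ (K', P') (conj HK' (conj HK'V (conj HP' HP'K')))); exact P'u.
  - exists (fun g => exists j,
               reduction gr (K (idx j)) (rel_closure T (units gr) (W j)) g).
    split; [|split].
    + apply (reduction_union_nbhd T gr Hmul Hinv (fun j => K (idx j)) (fun j => P (idx j)));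
        try assumption.
      * intros j; exact (proj1 (proj2 (proj2 (proj2_sig (idx j))))).
      * intros j; exact (proj2 (proj2 (proj2 (proj2_sig (idx j))))).
    + apply (union_diagonally_compact T gr Hmul Hinv Hhaus _
               (fun j => rel_closure T (units gr) (W j))).
      * intros j; apply reduction_compact; [exact Hmul | exact Hinv |
          exact (proj1 (proj2_sig (idx j))) | apply rel_closure_closed].
      * intros j a [_ Ha]; exact Ha.
      * apply locally_finite_closure; exact HWlf.
    + intros g [j [Kg _]]; exact (OVV g (proj1 (proj2 (proj2_sig (idx j))) g Kg)).
Qed.
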